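(* Let $K\in\mathbb{R}^{n\times n}$ be any positive semi-definite matrix, $\widetilde{S}\in\mathbb{R}^{n\times m}$, $\lambda>0$, and let $f:\mathbb{R}^n\to\mathbb{R}$ be convex and differentiable with $\mu$-Lipschitz gradient. Let $w^*$ be any minimizer of $w\mapsto f(Kw)+\frac{\lambda}{2}w^\top Kw$ over $\mathbb{R}^n$, let $\alpha^*$ be any minimizer of $\alpha\mapsto f(K\widetilde{S}\alpha)+\frac{\lambda}{2}\alpha^\top\widetilde{S}^\top K\widetilde{S}\alpha$ over $\mathbb{R}^m$, and define $\widetilde{w}=-\frac{1}{\lambda}\nabla f(K\widetilde{S}\alpha^* )$. If $\lambda\ge 2\mu Z_f^2$ with $Z_f=Z_f(K^{1/2},K^{1/2}\widetilde{S})$, then $$\|K^{1/2}(\widetilde{w}-w^* )\|_2\le\sqrt{\frac{\mu}{2\lambda}}\,Z_f\,\|K^{1/2}w^*\|_2 .$$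
   Context: $K^{1/2}$ is the p.s.d. square root of $K$. $f^*(z)=\sup_w\{w^\top z-f(w)\}$ is the Fenchel conjugate of $f$ with domain $\mathrm{dom} f^*$. For a matrix $B\in\mathbb{R}^{n\times p}$ and $S\in\mathbb{R}^{p\times m}$: let $x_B^*$ be the minimizer of $x\mapsto f(Bx)+\frac{\lambda}{2}\|x\|_2^2$, $z^*=\nabla f(Bx_B^* )$, $P_S=S(S^\top S)^\dagger S^\top$, $P_S^\perp=I_p-P_S$, and $Z_f(B,S)=\sup_{\Delta\in(\mathrm{dom} f^*-z^* ),\,\Delta\ne0}\left(\frac{\Delta^\top BP_S^\perp B^\top\Delta}{\|\Delta\|_2^2}\right)^{1/2}$. *)

From HB Require Import structures.
From mathcomp Require Import all_boot.
From Stdlib Require Import Reals.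
Set Implicit Arguments. Unset Strict Implicit. Unset Printing Implicit Defensive.
Local Open Scope R_scope.

HB.instance Definition _ :=
  Monoid.isComLaw.Build R 0%R Rplus
    (fun a b c => esym (Rplus_assoc a b c)) Rplus_comm Rplus_0_l.

Definition vec (n : nat) := 'I_n -> R.
Definition mat (n m : nat) := 'I_n -> 'I_m -> R.

Definition dot {n} (u v : vec n) : R := \big[Rplus/0%R]_(i < n) (u i * v i).
Definition norm2 {n} (u : vec n) : R := sqrt (dot u u).
Definition vadd {n} (u v : vec n) : vec n := fun i => u i + v i.
Definition vsub {n} (u v : vec n) : vec n := fun i => u i - v i.
Definition vscale {n} (a : R) (u : vec n) : vec n := fun i => a * u i.

Definition mv {n m} (A : mat n m) (x : vec m) : vec n :=
  fun i => \big[Rplus/0%R]_(j < m) (A i j * x j).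
Definition mm {n p m} (A : mat n p) (B : mat p m) : mat n m :=
  fun i j => \big[Rplus/0%R]_(k < p) (A i k * B k j).
Definition tr {n m} (A : mat n m) : mat m n := fun i j => A j i.
Definition idm (n : nat) : mat n n := fun i j => if i == j then 1 else 0.
Definition msub {n m} (A B : mat n m) : mat n m := fun i j => A i j - B i j.
Definition meq {n m} (A B : mat n m) : Prop := forall i j, A i j = B i j.

Definition psd {n} (K : mat n n) : Prop :=
  (forall i j, K i j = K j i) /\ (forall x : vec n, 0 <= dot x (mv K x)).

Definition is_psd_sqrt {n} (K Q : mat n n) : Prop := psd Q /\ meq (mm Q Q) K.

Definition is_pinv {n m} (A : mat n m) (X : mat m n) : Prop :=
  meq (mm A (mm X A)) A /\ meq (mm X (mm A X)) X /\
  meq (tr (mm A X)) (mm A X) /\ meq (tr (mm X A)) (mm X A).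

(* P_S = S (S^T S)^dagger S^T, given X = (S^T S)^dagger; P_S^perp = I - P_S *)
Definition projS {p m} (S : mat p m) (X : mat m m) : mat p p := mm S (mm X (tr S)).
Definition projS_perp {p m} (S : mat p m) (X : mat m m) : mat p p :=
  msub (@idm p) (projS S X).

Definition convex {n} (f : vec n -> R) : Prop :=
  forall (x y : vec n) (t : R), 0 <= t <= 1 ->
    f (vadd (vscale t x) (vscale (1 - t) y)) <= t * f x + (1 - t) * f y.

Definition has_gradient {n} (f : vec n -> R) (g : vec n -> vec n) : Prop :=
  forall (x : vec n) (eps : R), 0 < eps -> exists delta, 0 < delta /\
    forall h : vec n, norm2 h < delta ->
      Rabs (f (vadd x h) - f x - dot (g x) h) <= eps * norm2 h.

Definition lipschitz {n} (g : vec n -> vec n) (mu : R) : Prop :=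
  forall x y : vec n, norm2 (vsub (g x) (g y)) <= mu * norm2 (vsub x y).

Definition is_minimizer {p} (F : vec p -> R) (x : vec p) : Prop :=
  forall y : vec p, F x <= F y.

Definition in_dom_conj {n} (f : vec n -> R) (z : vec n) : Prop :=
  exists M, forall w : vec n, dot w z - f w <= M.

(* Z_f(B,S) = sup over Delta in (dom f-star - z-star), Delta <> 0, of
   (Delta^T M Delta / ||Delta||^2)^{1/2}, where M = B P_S^perp B^T.
   Zf_is f zs M Z : Z is this supremum (a finite real); 0 is added to the
   set (harmless as all values are >= 0; gives sup of empty set = 0). *)
Definition Zf_set {n} (f : vec n -> R) (zs : vec n) (M : mat n n) : R -> Prop :=
  fun r => r = 0 \/ exists D : vec n, (exists i, D i <> 0) /\
    in_dom_conj f (vadd zs D) /\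
    r = sqrt (dot D (mv M D) / (norm2 D) ^ 2).
Definition Zf_is {n} (f : vec n -> R) (zs : vec n) (M : mat n n) (Z : R) : Prop :=
  is_lub (Zf_set f zs M) Z.

From HB Require Import structures.
From mathcomp Require Import all_boot.
From Stdlib Require Import Reals Lra Psatz FunctionalExtensionality Classical.
From Coquelicot Require Import Coquelicot.
Local Open Scope R_scope.

Set Implicit Arguments. Unset Strict Implicit.

(* Write B = K^{1/2}, S = K^{1/2} St, x_B the minimiser of the
   ridge problem  x |-> f(Bx) + lam/2 |x|^2  and  z = grad f.

   1. Finite-dimensional linear algebra on vectors 'I_n -> R: bilinearity of
      the dot product, Cauchy-Schwarz, transposes, and the orthogonal
      projection P_S = S (S^T S)^+ S^T defined through the Penrose conditions.
   2. Smooth convex analysis: the gradient inequality, monotonicity of the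
      gradient, the descent lemma and co-coercivity
      |grad f x - grad f y|^2 <= mu <grad f x - grad f y, x - y>.
   3. First-order conditions: a minimiser of  a |-> f(B S a) + lam/2 |S a|^2
      has residual  B^T z + lam S a  orthogonal to range S; for S = I this is
      the ridge stationarity  B^T z(B x) = -lam x, which has a unique solution.
   4. The general bound (Lemma sketch_error_bound): with D = z(BSa) - z(Bx_B)
      and u = B^T D = P + Q split by P_S, co-coercivity and stationarity give
      |D|^2 <= mu <u, Sa - x_B>,  lam <u, Sa - x_B> = -|P|^2 - lam <Q, x_B>,
      while |Q|^2 = D^T B P_S^perp B^T D <= Z_f^2 |D|^2; a scalar inequality
      then yields  |u|/lam <= sqrt(mu/(2 lam)) Z_f |x_B|.
   5. Theorem 3: K^{1/2} w_star = x_B and K^{1/2} (wt - w_star) = -u/lam, so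
      the kernel statement is the general bound for B = K^{1/2},
      S = K^{1/2} St. *)

Lemma big_scale n (a : R) (F : 'I_n -> R) :
  \big[Rplus/0]_(i < n) (a * F i) = a * \big[Rplus/0]_(i < n) F i.
Proof. elim/big_rec2: _ => [|i x y _ ->]; ring. Qed.

Lemma big_lin n (a b : R) (F G : 'I_n -> R) :
  \big[Rplus/0]_(i < n) (a * F i + b * G i) =
  a * \big[Rplus/0]_(i < n) F i + b * \big[Rplus/0]_(i < n) G i.
Proof. elim/big_rec3: _ => [|i x y z _ ->]; ring. Qed.

Lemma big_ext n (F G : 'I_n -> R) : (forall i, F i = G i) ->
  \big[Rplus/0]_(i < n) F i = \big[Rplus/0]_(i < n) G i.
Proof. by move=> H; apply: eq_bigr => i _; apply: H. Qed.

Section DotProduct.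
Variable n : nat.
Implicit Types u v w : vec n.

Lemma dot_sym u v : dot u v = dot v u.
Proof. by apply: big_ext => i; ring. Qed.

Lemma dot_ext u u' v : (forall i, u i = u' i) -> dot u v = dot u' v.
Proof. by move=> H; apply: big_ext => i; rewrite H. Qed.

Lemma dot_ext_r u v v' : (forall i, v i = v' i) -> dot u v = dot u v'.
Proof. by move=> H; apply: big_ext => i; rewrite H. Qed.

Lemma dot0l w : dot (fun _ => 0) w = 0.
Proof. by rewrite /dot big1 // => i _; ring. Qed.

Lemma dot_comb_l (a b : R) u v w :
  dot (fun i => a * u i + b * v i) w = a * dot u w + b * dot v w.
Proof. by rewrite /dot -big_lin; apply: big_ext => i; ring. Qed.

Lemma dot_add_l u v w : dot (vadd u v) w = dot u w + dot v w.
Proof.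
by rewrite (@dot_ext _ (fun i => 1 * u i + 1 * v i)) ?dot_comb_l /vadd;
  [ring | move=> i; ring].
Qed.

Lemma dot_sub_l u v w : dot (vsub u v) w = dot u w - dot v w.
Proof.
by rewrite (@dot_ext _ (fun i => 1 * u i + (-1) * v i)) ?dot_comb_l /vsub;
  [ring | move=> i; ring].
Qed.

Lemma dot_scale_l a u w : dot (vscale a u) w = a * dot u w.
Proof.
by rewrite (@dot_ext _ (fun i => a * u i + 0 * u i)) ?dot_comb_l /vscale;
  [ring | move=> i; ring].
Qed.

Lemma dot_add_r u v w : dot w (vadd u v) = dot w u + dot w v.
Proof. by rewrite dot_sym dot_add_l !(dot_sym w). Qed.

Lemma dot_sub_r u v w : dot w (vsub u v) = dot w u - dot w v.
Proof. by rewrite dot_sym dot_sub_l !(dot_sym w). Qed.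

Lemma dot_scale_r a u w : dot w (vscale a u) = a * dot w u.
Proof. by rewrite dot_sym dot_scale_l (dot_sym w). Qed.

Lemma dot_ge0 u : 0 <= dot u u.
Proof.
rewrite /dot; elim/big_ind: _ => //; [lra | move=> x y; lra | move=> i _; nra].
Qed.

Lemma dot_eq0 u : dot u u = 0 -> forall i, u i = 0.
Proof.
move=> H i; move: H; rewrite /dot (bigD1 i) //= => H.
have Hrest : 0 <= \big[Rplus/0]_(j < n | j != i) (u j * u j).
  by elim/big_ind: _ => //; [lra | move=> x y; lra | move=> j _; nra].
set rest := bigop _ _ _ in H Hrest; nra.
Qed.

Lemma dot_pos u : (exists i, u i <> 0) -> 0 < dot u u.
Proof.
move=> [i Hi]; case: (Rle_lt_or_eq_dec _ _ (dot_ge0 u)) => // H0.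
by case: Hi; apply: dot_eq0 (esym H0) i.
Qed.

Lemma cauchy_schwarz_sq u v : (dot u v) ^ 2 <= dot u u * dot v v.
Proof.
have [Hv | Hv] := Req_dec (dot v v) 0.
  rewrite (dot_sym u) (@dot_ext v (fun _ => 0) u) ?dot0l; last exact: dot_eq0.
  by rewrite Hv; nra.
set s := dot u v / dot v v.
have := dot_ge0 (vsub u (vscale s v)).
rewrite !dot_sub_l !dot_sub_r !dot_scale_l !dot_scale_r (dot_sym v u) => H.
have Hs : s * dot v v = dot u v by rewrite /s; field.
by have := dot_ge0 v; nra.
Qed.

Lemma cauchy_schwarz u v : dot u v <= norm2 u * norm2 v.
Proof.
rewrite /norm2 -sqrt_mult; try exact: dot_ge0.
apply: Rle_trans (Rle_abs _) _.
rewrite -sqrt_Rsqr_abs; apply: sqrt_le_1_alt; rewrite /Rsqr.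
by have := cauchy_schwarz_sq u v; lra.
Qed.

Lemma norm2_sq u : norm2 u ^ 2 = dot u u.
Proof. by rewrite /norm2 /= Rmult_1_r sqrt_sqrt //; apply: dot_ge0. Qed.

Lemma norm2_ge0 u : 0 <= norm2 u.
Proof. exact: sqrt_pos. Qed.

Lemma norm2_scale a u : norm2 (vscale a u) = Rabs a * norm2 u.
Proof.
rewrite /norm2 dot_scale_l dot_scale_r -Rmult_assoc sqrt_mult.
- by rewrite -sqrt_Rsqr_abs.
- by nra.
- exact: dot_ge0.
Qed.

End DotProduct.

Lemma mv_meq n m (A B : mat n m) x : meq A B -> mv A x = mv B x.
Proof.
by move=> H; apply: functional_extensionality => i; apply: big_ext => j; rewrite H.
Qed.

Lemma mv_comb n m (A : mat n m) a b x y :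
  mv A (fun i => a * x i + b * y i) = fun i => a * mv A x i + b * mv A y i.
Proof.
by apply: functional_extensionality => i; rewrite /mv -big_lin; apply: big_ext => j; ring.
Qed.

Lemma mv_add n m (A : mat n m) x y : mv A (vadd x y) = vadd (mv A x) (mv A y).
Proof.
have -> : vadd x y = fun i => 1 * x i + 1 * y i.
  by apply: functional_extensionality => i; rewrite /vadd; ring.
by rewrite mv_comb; apply: functional_extensionality => i; rewrite /vadd; ring.
Qed.

Lemma mv_sub n m (A : mat n m) x y : mv A (vsub x y) = vsub (mv A x) (mv A y).
Proof.
have -> : vsub x y = fun i => 1 * x i + (-1) * y i.
  by apply: functional_extensionality => i; rewrite /vsub; ring.
by rewrite mv_comb; apply: functional_extensionality => i; rewrite /vsub; ring.
Qed.

Lemma mv_scale n m (A : mat n m) a x : mv A (vscale a x) = vscale a (mv A x).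
Proof.
have -> : vscale a x = fun i => a * x i + 0 * x i.
  by apply: functional_extensionality => i; rewrite /vscale; ring.
by rewrite mv_comb; apply: functional_extensionality => i; rewrite /vscale; ring.
Qed.

Lemma mv_zero n m (A : mat n m) : mv A (fun _ => 0) = fun _ => 0.
Proof.
by apply: functional_extensionality => i; rewrite /mv big1 // => j _; ring.
Qed.

Lemma dot_mv_tr n m (A : mat n m) u v : dot u (mv A v) = dot (mv (tr A) u) v.
Proof.
rewrite /dot /mv /tr.
rewrite (@big_ext _ _ (fun i => \big[Rplus/0]_(j < m) (u i * A i j * v j))); last first.
  by move=> i; rewrite -big_scale; apply: big_ext => j; ring.
rewrite exchange_big; apply: big_ext => j.
by rewrite Rmult_comm -big_scale; apply: big_ext => i; ring.
Qed.

Lemma tr_sym n (A : mat n n) : (forall i j, A i j = A j i) -> tr A = A.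
Proof.
by move=> H; do 2!apply: functional_extensionality => ?; rewrite /tr H.
Qed.

Lemma mv_mm n p m (A : mat n p) (B : mat p m) x : mv (mm A B) x = mv A (mv B x).
Proof.
apply: functional_extensionality => i; rewrite /mv /mm.
rewrite (@big_ext _ _ (fun j => \big[Rplus/0]_(k < p) (A i k * B k j * x j))); last first.
  by move=> j; rewrite Rmult_comm -big_scale; apply: big_ext => k; ring.
rewrite exchange_big; apply: big_ext => k.
by rewrite -big_scale; apply: big_ext => j; ring.
Qed.

Lemma mv_idm n (x : vec n) : mv (@idm n) x = x.
Proof.
apply: functional_extensionality => i; rewrite /mv /idm (bigD1 i) //= eqxx big1.
  by ring.
by move=> j /negbTE; rewrite eq_sym => ->; ring.
Qed.

Lemma mv_msub n m (A B : mat n m) x : mv (msub A B) x = vsub (mv A x) (mv B x).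
Proof.
apply: functional_extensionality => i; rewrite /mv /msub /vsub.
transitivity (1 * \big[Rplus/0]_(j < m) (A i j * x j)
              + -1 * \big[Rplus/0]_(j < m) (B i j * x j)); last by ring.
by rewrite -big_lin; apply: big_ext => j; ring.
Qed.

Lemma quad_form_sqrt n (K Kh : mat n n) x :
  (forall i j, Kh i j = Kh j i) -> meq (mm Kh Kh) K ->
  dot x (mv K x) = norm2 (mv Kh x) ^ 2.
Proof.
move=> Hsym HKK.
by rewrite norm2_sq -(mv_meq x HKK) mv_mm dot_mv_tr tr_sym.
Qed.

Lemma deriv_at_min (phi : R -> R) (l : R) :
  derivable_pt_lim phi 0 l -> (forall t, phi 0 <= phi t) -> l = 0.
Proof.
move=> Hd Hmin.
have := deriv_minimum phi (-1) 1 0 (exist _ l Hd) ltac:(lra) ltac:(lra)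
  (fun t _ _ => Hmin t).
by rewrite /derive_pt.
Qed.

Section SmoothConvex.
Variable n : nat.
Variable f : vec n -> R.
Variable g : vec n -> vec n.
Hypothesis Hg : has_gradient f g.

Lemma dir_deriv (y d : vec n) c :
  derivable_pt_lim (fun t => f (vadd y (vscale t d))) c
    (dot (g (vadd y (vscale c d))) d).
Proof.
move=> eps Heps.
set p := vadd y (vscale c d); set N := norm2 d.
have HN : 0 <= N by apply: norm2_ge0.
have He' : 0 < eps / (2 * (N + 1)).
  by apply: Rmult_lt_0_compat; [lra | apply: Rinv_0_lt_compat; lra].
have [delta [Hd Hb]] := Hg p He'.
have Hd' : 0 < delta / (N + 1).
  by apply: Rmult_lt_0_compat; [lra | apply: Rinv_0_lt_compat; lra].
exists (mkposreal _ Hd') => h hne /= hlt.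
have -> : f (vadd y (vscale (c + h) d)) = f (vadd p (vscale h d)).
  by congr f; apply: functional_extensionality => i; rewrite /p /vadd /vscale; ring.
have Hah : 0 < Rabs h by apply: Rabs_pos_lt.
have Hsmall : norm2 (vscale h d) < delta.
  rewrite norm2_scale -/N.
  have : Rabs h * (N + 1) < delta.
    have := Rmult_lt_compat_r (N + 1) _ _ ltac:(lra) hlt.
    by rewrite /Rdiv Rmult_assoc Rinv_l; lra.
  by nra.
have := Hb _ Hsmall; rewrite dot_scale_r norm2_scale -/N => Hlin.
set A := f (vadd p (vscale h d)) - f p in Hlin *.
set G := dot (g p) d in Hlin *.
rewrite (_ : A / h - G = (A - h * G) / h); last by field.
rewrite Rabs_div //.
apply: (Rmult_lt_reg_r (Rabs h)) => //.
rewrite /Rdiv Rmult_assoc Rinv_l ?Rmult_1_r; last by lra.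
have Hfrac : N / (2 * (N + 1)) < 1.
  apply: (Rmult_lt_reg_r (2 * (N + 1))); first by lra.
  by rewrite /Rdiv Rmult_assoc Rinv_l; lra.
rewrite (_ : eps / (2 * (N + 1)) * (Rabs h * N)
             = eps * Rabs h * (N / (2 * (N + 1)))) in Hlin; last by field; lra.
have : 0 < eps * Rabs h by nra.
by nra.
Qed.

Hypothesis Hc : convex f.

Lemma grad_ineq x y : f x + dot (g x) (vsub y x) <= f y.
Proof.
set d := vsub y x.
have Hx0 : vadd x (vscale 0 d) = x.
  by apply: functional_extensionality => i; rewrite /vadd /vscale; ring.
have Hd := dir_deriv x d 0; rewrite Hx0 in Hd.
have Hchord : forall t, 0 <= t <= 1 ->
    f (vadd x (vscale t d)) <= t * f y + (1 - t) * f x.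
  move=> t Ht; have := Hc y x Ht.
  suff -> : vadd (vscale t y) (vscale (1 - t) x) = vadd x (vscale t d) by [].
  by apply: functional_extensionality => i; rewrite /vadd /vscale /d /vsub; ring.
apply: Rnot_lt_le => Hlt.
set l := dot (g x) d in Hd Hlt.
have [delta Hdel] := Hd _ (ltac:(lra) : 0 < f x + l - f y).
set h := Rmin 1 (delta / 2).
have Hdp := cond_pos delta.
have hpos : 0 < h by apply: Rmin_pos; lra.
have hle : h <= 1 by apply: Rmin_l.
have hle2 : h <= delta / 2 by apply: Rmin_r.
have := Hdel h ltac:(lra) ltac:(rewrite Rabs_pos_eq; lra).
rewrite Rplus_0_l Hx0.
have := Hchord h ltac:(lra).
set F := f (vadd x (vscale h d)) => HF.
rewrite (_ : (F - f x) / h - l = ((F - f x) - h * l) / h); last by field; lra.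
rewrite Rabs_div ?(Rabs_pos_eq h); try lra.
move=> Hq; have := Rmult_lt_compat_r h _ _ hpos Hq.
rewrite /Rdiv Rmult_assoc Rinv_l; last by lra.
by have := Rle_abs (- (F - f x - h * l)); rewrite Rabs_Ropp; nra.
Qed.

Lemma grad_monotone x y : 0 <= dot (vsub (g x) (g y)) (vsub x y).
Proof.
have := grad_ineq x y; have := grad_ineq y x.
rewrite dot_sub_l !dot_sub_r.
by have := dot_sym (g x) x; have := dot_sym (g y) y; lra.
Qed.

Lemma grad_in_dom_conj y : in_dom_conj f (g y).
Proof.
exists (dot y (g y) - f y) => w.
by have := grad_ineq y w; rewrite dot_sub_r (dot_sym w) (dot_sym y); lra.
Qed.

Variable mu : R.
Hypothesis Hl : lipschitz g mu.

Lemma descent y d : f (vadd y d) <= f y + dot (g y) d + mu / 2 * dot d d.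
Proof.
set a := dot (g y) d; set b := mu / 2 * dot d d.
set phi := fun t => f (vadd y (vscale t d)) - (a * t + b * t ^ 2).
set phi' := fun c => dot (g (vadd y (vscale c d))) d - (a + 2 * b * c).
have Hd : forall c, 0 <= c <= 1 -> derivable_pt_lim phi c (phi' c).
  move=> c _.
  have Hpoly : derivable_pt_lim (fun t => a * t + b * t ^ 2) c (a + 2 * b * c).
    by apply/is_derive_Reals; auto_derive; [| ring].
  exact: derivable_pt_lim_minus _ _ _ _ _ (dir_deriv y d c) Hpoly.
have [c [Ec Hc01]] := MVT_cor2 phi phi' 0 1 ltac:(lra) Hd.
have Hslope : phi' c <= 0.
  rewrite /phi'; set q := vadd y (vscale c d).
  have Hgap : dot (g q) d - a = dot (vsub (g q) (g y)) d by rewrite dot_sub_l.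
  have Hcs := cauchy_schwarz (vsub (g q) (g y)) d.
  have Hlip := Hl q y.
  have Hqy : norm2 (vsub q y) = c * norm2 d.
    have -> : vsub q y = vscale c d.
      by apply: functional_extensionality => i; rewrite /vsub /q /vadd /vscale; ring.
    by rewrite norm2_scale Rabs_pos_eq //; lra.
  rewrite Hqy in Hlip.
  have := norm2_ge0 d; have := norm2_ge0 (vsub (g q) (g y)).
  have := norm2_sq d; rewrite /b /= Rmult_1_r => Hdd N1 N0.
  have : norm2 (vsub (g q) (g y)) * norm2 d <= mu * (c * norm2 d) * norm2 d by nra.
  by nra.
have E0 : phi 0 = f y.
  rewrite /phi (_ : vadd y (vscale 0 d) = y); first by ring.
  by apply: functional_extensionality => i; rewrite /vadd /vscale; ring.
have E1 : phi 1 = f (vadd y d) - (a + b).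
  rewrite /phi (_ : vadd y (vscale 1 d) = vadd y d); first by ring.
  by apply: functional_extensionality => i; rewrite /vadd /vscale; ring.
by rewrite E0 E1 in Ec; nra.
Qed.

(* Combining convexity and the descent lemma at y - (g y - g x)/mu. *)
Lemma grad_gap_lower x y : 0 < mu ->
  f x + dot (g x) (vsub y x) + dot (vsub (g y) (g x)) (vsub (g y) (g x)) / (2 * mu)
  <= f y.
Proof.
move=> Hmu.
set e := vsub (g y) (g x); set d := vscale (- / mu) e; set w := vadd y d.
have G1 := grad_ineq x w; have G2 := descent y d.
rewrite (_ : vsub w x = vadd (vsub y x) d) in G1; last first.
  by apply: functional_extensionality => i; rewrite /w /vadd /vsub; ring.
rewrite dot_add_r /d !dot_scale_r in G1.
rewrite /d !dot_scale_r !dot_scale_l -/d -/w in G2.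
have Eee : dot e e = dot (g y) e - dot (g x) e by rewrite {1}/e dot_sub_l.
set E := dot e e in Eee *.
rewrite (_ : mu / 2 * (- / mu * (- / mu * E)) = E / (2 * mu)) in G2; last by field; lra.
have : E / (2 * mu) = / mu * E - E / (2 * mu) by field; lra.
by nra.
Qed.

Lemma cocoercive x y :
  dot (vsub (g x) (g y)) (vsub (g x) (g y))
  <= mu * dot (vsub (g x) (g y)) (vsub x y).
Proof.
set e := vsub (g x) (g y).
have [Hmu | Hmu] := Rle_lt_dec mu 0.
  have Ne : norm2 e = 0.
    have := Hl x y; have := norm2_ge0 e; have := norm2_ge0 (vsub x y).
    by rewrite -/e; nra.
  have Ee : dot e e = 0 by rewrite -norm2_sq Ne; ring.
  have := cauchy_schwarz e (vsub x y); have := grad_monotone x y.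
  by rewrite -/e Ne Ee; nra.
have O1 := grad_gap_lower y x Hmu; have O2 := grad_gap_lower x y Hmu.
have Eneg : vsub (g y) (g x) = vscale (-1) e.
  by apply: functional_extensionality => i; rewrite /e /vsub /vscale; ring.
rewrite Eneg dot_scale_l dot_scale_r -/e in O2.
have Esum : dot e (vsub x y) = dot (g x) (vsub x y) - dot (g y) (vsub x y).
  by rewrite /e dot_sub_l.
have Eyx : vsub y x = vscale (-1) (vsub x y).
  by apply: functional_extensionality => i; rewrite /vsub /vscale; ring.
rewrite Eyx dot_scale_r in O2.
set E := dot e e in O1 O2 *.
have Hsum : E / mu <= dot e (vsub x y).
  rewrite (_ : E / mu = E / (2 * mu) + E / (2 * mu)); last by field; lra.
  by lra.
have := Rmult_le_compat_l mu _ _ (Rlt_le _ _ Hmu) Hsum.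
by rewrite (_ : mu * (E / mu) = E) //; field; lra.
Qed.

End SmoothConvex.

(* First-order optimality of the ridge problem  min_x f(Bx) + lam/2 |x|^2:
   B^T grad f(Bx) = -lam x. *)
Definition stationary n p (g : vec n -> vec n) (B : mat n p) (lam : R) (x : vec p) :
  Prop := mv (tr B) (g (mv B x)) = vscale (- lam) x.

Lemma minimizer_ext p (F G : vec p -> R) x :
  (forall y, F y = G y) -> is_minimizer F x -> is_minimizer G x.
Proof. by move=> E Hmin y; rewrite -!E. Qed.

Section FirstOrder.
Variable n : nat.
Variable f : vec n -> R.
Variable g : vec n -> vec n.
Variable lam : R.
Hypothesis Hg : has_gradient f g.

Lemma subspace_stationary p m (B : mat n p) (S : mat p m) (a : vec m) :
  is_minimizer (fun c => f (mv B (mv S c)) + lam / 2 * norm2 (mv S c) ^ 2) a ->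
  forall b, dot (vadd (mv (tr B) (g (mv B (mv S a)))) (vscale lam (mv S a))) (mv S b) = 0.
Proof.
move=> Hmin b.
set x := mv S a; set d := mv S b.
set psi := fun t => f (vadd (mv B x) (vscale t (mv B d)))
  + lam / 2 * (dot x x + 2 * t * dot x d + t ^ 2 * dot d d).
have Hline : forall t, psi t = f (mv B (mv S (vadd a (vscale t b))))
    + lam / 2 * norm2 (mv S (vadd a (vscale t b))) ^ 2.
  move=> t; rewrite norm2_sq !mv_add !mv_scale -/x -/d.
  by rewrite !dot_add_l !dot_add_r !dot_scale_l !dot_scale_r (dot_sym d x) /psi; ring.
have Hquad : derivable_pt_lim
    (fun t => lam / 2 * (dot x x + 2 * t * dot x d + t ^ 2 * dot d d)) 0 (lam * dot x d).
  by apply/is_derive_Reals; auto_derive; [| field].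
have Hder := derivable_pt_lim_plus _ _ _ _ _ (dir_deriv Hg (mv B x) (mv B d) 0) Hquad.
rewrite (_ : vadd (mv B x) (vscale 0 (mv B d)) = mv B x) in Hder; last first.
  by apply: functional_extensionality => i; rewrite /vadd /vscale; ring.
have Hpsi_min : forall t, psi 0 <= psi t.
  move=> t; rewrite !Hline (_ : vadd a (vscale 0 b) = a); first exact: Hmin.
  by apply: functional_extensionality => i; rewrite /vadd /vscale; ring.
have := deriv_at_min (Hder : derivable_pt_lim psi 0 _) Hpsi_min.
by rewrite dot_add_l dot_scale_l -dot_mv_tr.
Qed.

Lemma ridge_stationary p (B : mat n p) x :
  is_minimizer (fun y => f (mv B y) + lam / 2 * norm2 y ^ 2) x -> stationary g B lam x.
Proof.
move=> Hmin.
have HminI : is_minimizer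
    (fun c => f (mv B (mv (@idm p) c)) + lam / 2 * norm2 (mv (@idm p) c) ^ 2) x.
  by apply: minimizer_ext Hmin => y; rewrite mv_idm.
have Horth := subspace_stationary HminI.
set r := vadd (mv (tr B) (g (mv B x))) (vscale lam x).
have Hr : forall i, r i = 0.
  by apply: dot_eq0; have := Horth r; rewrite !mv_idm.
apply: functional_extensionality => i.
by have := Hr i; rewrite /r /vadd /vscale; lra.
Qed.

Lemma kernel_stationary (Kh : mat n n) w :
  (forall i j, Kh i j = Kh j i) ->
  is_minimizer (fun v => f (mv Kh (mv Kh v)) + lam / 2 * norm2 (mv Kh v) ^ 2) w ->
  stationary g Kh lam (mv Kh w).
Proof.
move=> Hsym Hmin.
have Horth := subspace_stationary Hmin.
set r := vadd (g (mv Kh (mv Kh w))) (vscale lam w).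
have Hr : forall i, mv Kh r i = 0.
  apply: dot_eq0; have := Horth r.
  by rewrite tr_sym // /r mv_add mv_scale.
rewrite /stationary tr_sym //; apply: functional_extensionality => i.
by have := Hr i; rewrite /r mv_add mv_scale /vadd /vscale; lra.
Qed.

Hypothesis Hc : convex f.

(* Monotonicity of the gradient makes the ridge solution unique. *)
Lemma stationary_unique p (B : mat n p) x y :
  0 < lam -> stationary g B lam x -> stationary g B lam y -> x = y.
Proof.
move=> Hlam Hx Hy.
have Hmono := grad_monotone Hg Hc (mv B x) (mv B y).
rewrite -mv_sub dot_mv_tr mv_sub Hx Hy in Hmono.
rewrite (_ : vsub (vscale (- lam) x) (vscale (- lam) y) = vscale (- lam) (vsub x y))
  in Hmono; last first.
  by apply: functional_extensionality => i; rewrite /vsub /vscale; ring.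
rewrite dot_scale_l in Hmono.
have Hz : dot (vsub x y) (vsub x y) = 0 by have := dot_ge0 (vsub x y); nra.
apply: functional_extensionality => i.
by have := dot_eq0 Hz i; rewrite /vsub; lra.
Qed.

End FirstOrder.

Section Projection.
Variables p m : nat.
Variable S : mat p m.
Variable X : mat m m.
Hypothesis Hpinv : is_pinv (mm (tr S) S) X.

Lemma projS_range u : mv (projS S X) u = mv S (mv X (mv (tr S) u)).
Proof. by rewrite /projS !mv_mm. Qed.

Lemma projS_decomp u : u = vadd (mv (projS S X) u) (mv (projS_perp S X) u).
Proof.
rewrite /projS_perp mv_msub mv_idm.
by apply: functional_extensionality => i; rewrite /vadd /vsub; ring.
Qed.

(* S^T (I - P_S) u = 0: the residual is orthogonal to range S.  Only the
   Penrose conditions  A X A = A  and  (A X)^T = A X  for A = S^T S are used. *)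
Lemma projS_perp_orth u b : dot (mv (projS_perp S X) u) (mv S b) = 0.
Proof.
case: Hpinv => HAXA [_ [HAXsym _]].
set A := mm (tr S) S; set v := mv (tr S) u; set y := mv X v.
set e := vsub v (mv A y).
have He : mv (tr S) (mv (projS_perp S X) u) = e.
  by rewrite /projS_perp mv_msub mv_idm projS_range mv_sub /e /A mv_mm.
have HAy : forall c, dot (mv A y) (mv A c) = dot v (mv A c).
  move=> c; rewrite /y -(mv_mm A X v) dot_sym dot_mv_tr (mv_meq _ HAXsym).
  by rewrite (mv_mm A X (mv A c)) -(mv_mm X A c) -(mv_mm A (mm X A) c) (mv_meq _ HAXA) dot_sym.
have HeA : dot e (mv A e) = 0 by rewrite {1}/e dot_sub_l HAy; lra.
have HSe : forall i, mv S e i = 0.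
  by apply: dot_eq0; rewrite -HeA /A mv_mm dot_mv_tr dot_sym.
have He0 : forall i, e i = 0.
  apply: dot_eq0; rewrite -{1}He -dot_mv_tr (dot_ext_r _ HSe).
  by rewrite dot_sym dot0l.
by rewrite dot_mv_tr He (dot_ext _ He0) dot0l.
Qed.

Lemma projS_orth u : dot (mv (projS S X) u) (mv (projS_perp S X) u) = 0.
Proof. by rewrite projS_range dot_sym projS_perp_orth. Qed.

Lemma projS_pythagoras u :
  dot u u = dot (mv (projS S X) u) (mv (projS S X) u)
            + dot (mv (projS_perp S X) u) (mv (projS_perp S X) u).
Proof.
rewrite {1 2}(projS_decomp u) dot_add_l !dot_add_r projS_orth.
by rewrite dot_sym projS_orth; ring.
Qed.

Lemma Zf_form_proj n (B : mat n p) D :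
  dot D (mv (mm B (mm (projS_perp S X) (tr B))) D)
  = dot (mv (projS_perp S X) (mv (tr B) D)) (mv (projS_perp S X) (mv (tr B) D)).
Proof.
rewrite !mv_mm dot_mv_tr; set u := mv (tr B) D.
by rewrite {1}(projS_decomp u) dot_add_l projS_orth; ring.
Qed.

Lemma residual_identity n (B : mat n p) (zS zs : vec n) (xB : vec p) (a : vec m) lam :
  mv (tr B) zs = vscale (- lam) xB ->
  (forall b, dot (vadd (mv (tr B) zS) (vscale lam (mv S a))) (mv S b) = 0) ->
  lam * dot (mv (tr B) (vsub zS zs)) (vsub (mv S a) xB)
  = - dot (mv (projS S X) (mv (tr B) (vsub zS zs))) (mv (projS S X) (mv (tr B) (vsub zS zs)))
    - lam * dot (mv (projS_perp S X) (mv (tr B) (vsub zS zs))) xB.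
Proof.
move=> Hzs Hres; set u := mv (tr B) (vsub zS zs).
set P := mv (projS S X) u; set Q := mv (projS_perp S X) u.
have Hsplit : forall w, dot u w = dot P w + dot Q w.
  by move=> w; rewrite {1}(projS_decomp u) dot_add_l.
have HP : P = mv S (mv X (mv (tr S) u)) by apply: projS_range.
have E1 : dot u (mv S a) = dot P (mv S a).
  by rewrite Hsplit /Q (projS_perp_orth u a); ring.
have E2 : dot u P = dot P P.
  by rewrite Hsplit /Q HP (projS_perp_orth u (mv X (mv (tr S) u))); ring.
have Eu : u = vadd (mv (tr B) zS) (vscale lam xB).
  rewrite /u mv_sub Hzs.
  by apply: functional_extensionality => i; rewrite /vadd /vsub /vscale; ring.
have E3 : dot u P = dot (mv (tr B) zS) P + lam * dot xB P.
  by rewrite {1}Eu dot_add_l dot_scale_l.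
have E4 := Hres (mv X (mv (tr S) u)); rewrite -HP dot_add_l dot_scale_l in E4.
rewrite dot_sub_r E1 (Hsplit xB) (dot_sym P (mv S a)) (dot_sym P xB).
by lra.
Qed.

End Projection.

Lemma Zf_nonneg n (f : vec n -> R) zs M Z : Zf_is f zs M Z -> 0 <= Z.
Proof. by move=> [HZ _]; apply: HZ; left. Qed.

Lemma Zf_bound n (f : vec n -> R) zs M Z D :
  Zf_is f zs M Z -> (exists i, D i <> 0) -> in_dom_conj f (vadd zs D) ->
  dot D (mv M D) <= Z ^ 2 * dot D D.
Proof.
move=> HZ HD Hdom.
have HDD := dot_pos HD; have HZ0 := Zf_nonneg HZ.
set r := dot D (mv M D) / dot D D.
have Er : dot D (mv M D) = r * dot D D by rewrite /r; field; lra.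
have Hr : sqrt r <= Z.
  by apply: (proj1 HZ); right; exists D; rewrite norm2_sq.
rewrite Er; apply: Rmult_le_compat_r; first by lra.
have [Hneg | Hpos] := Rle_lt_dec r 0; first by nra.
by rewrite -(sqrt_sqrt r); [have := sqrt_pos r; nra | lra].
Qed.

(* The scalar core of the bound, with U = |u|^2 = |P|^2 + |Q|^2, T2 = |D|^2,
   X2 = |x_B|^2, c = <Q, x_B> and Du = <u, S a - x_B>: maximising over |D|
   the quadratic that the hypotheses produce gives the claimed constant. *)
Lemma scalar_bound (lam mu Z U P2 Q2 X2 T2 c Du : R) :
  0 < lam -> 0 < mu -> 0 <= Z -> 2 * mu * Z ^ 2 <= lam ->
  0 <= P2 -> 0 <= Q2 -> 0 <= X2 -> 0 <= T2 ->
  U = P2 + Q2 -> T2 <= mu * Du -> lam * Du = - P2 - lam * c ->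
  c ^ 2 <= Q2 * X2 -> Q2 <= Z ^ 2 * T2 ->
  U <= lam * mu * Z ^ 2 * X2 / 2.
Proof.
move=> Hl Hm HZ HlZ HP HQ HX HT EU HD ED Hc HQZ.
set Qn := sqrt Q2; set Xn := sqrt X2; set t := sqrt T2.
have EQ : Q2 = Qn * Qn by rewrite /Qn sqrt_sqrt.
have EX : X2 = Xn * Xn by rewrite /Xn sqrt_sqrt.
have ET : T2 = t * t by rewrite /t sqrt_sqrt.
have HQn : 0 <= Qn := sqrt_pos _.
have HXn : 0 <= Xn := sqrt_pos _.
have Ht : 0 <= t := sqrt_pos _.
rewrite EQ EX ET in Hc HQZ EU HD *.
have Hc2 : - (Qn * Xn) <= c.
  apply: Rnot_lt_le => H.
  have : 0 < (- (Qn * Xn) - c) * (Qn * Xn - c) by apply: Rmult_lt_0_compat; nra.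
  by nra.
have HQt : Qn <= Z * t.
  apply: Rnot_lt_le => H.
  have : 0 < (Qn - Z * t) * (Qn + Z * t) by apply: Rmult_lt_0_compat; nra.
  by nra.
have S1 : lam * (t * t) <= mu * (- P2 - lam * c) by rewrite -ED; nra.
have S2 : mu * P2 <= - lam * (t * t) + mu * lam * Qn * Xn.
  have : mu * lam * (- (Qn * Xn)) <= mu * lam * c by apply: Rmult_le_compat_l; nra.
  by nra.
have S3 : mu * (Qn * Qn) <= lam * (t * t) / 2.
  have : Qn * Qn <= Z ^ 2 * (t * t) by nra.
  by nra.
have S4 : mu * U <= mu * lam * Z * t * Xn - lam * (t * t) / 2.
  have : mu * lam * Qn * Xn <= mu * lam * (Z * t) * Xn.
    have : 0 <= mu * lam * Xn by apply: Rmult_le_pos; nra.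
    by nra.
  by nra.
have S5 : mu * U <= mu * (lam * mu * Z ^ 2 * (Xn * Xn) / 2).
  have : 0 <= lam / 2 * (t - mu * Z * Xn) ^ 2.
    by apply: Rmult_le_pos; [lra | apply: pow2_ge_0].
  by nra.
exact: Rmult_le_reg_l S5.
Qed.

Lemma sqrt_scaled_bound (lam mu Z a b : R) :
  0 < lam -> 0 <= mu -> 0 <= Z -> 0 <= a -> 0 <= b ->
  a ^ 2 <= lam * mu * Z ^ 2 * b ^ 2 / 2 ->
  / lam * a <= sqrt (mu / (2 * lam)) * Z * b.
Proof.
move=> Hlam Hmu HZ Ha Hb Hab.
have Hil : 0 < / lam by apply: Rinv_0_lt_compat.
have Hs : 0 <= mu / (2 * lam).
  by apply: Rmult_le_pos; [lra | apply/Rlt_le/Rinv_0_lt_compat; lra].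
set s := sqrt (mu / (2 * lam)).
have Es : s * s = mu / (2 * lam) by rewrite /s sqrt_sqrt.
have Hs0 : 0 <= s := sqrt_pos _.
apply: Rsqr_incr_0_var; last by apply: Rmult_le_pos; [apply: Rmult_le_pos |].
rewrite /Rsqr.
have -> : s * Z * b * (s * Z * b) = / lam * / lam * (lam * mu * Z ^ 2 * b ^ 2 / 2).
  by rewrite (_ : s * Z * b * (s * Z * b) = s * s * Z ^ 2 * b ^ 2); [rewrite Es; field | ring]; lra.
rewrite (_ : / lam * a * (/ lam * a) = / lam * / lam * a ^ 2); last by ring.
by apply: Rmult_le_compat_l => //; nra.
Qed.

Section SketchBound.
Variables n p m : nat.
Variable f : vec n -> R.
Variable g : vec n -> vec n.
Variables mu lam : R.
Hypothesis Hg : has_gradient f g.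
Hypothesis Hc : convex f.
Hypothesis Hl : lipschitz g mu.
Hypothesis Hlam : 0 < lam.

Lemma sketch_error_bound (B : mat n p) (S : mat p m) (X : mat m m)
    (xB : vec p) (a : vec m) (Z : R) :
  is_pinv (mm (tr S) S) X ->
  stationary g B lam xB ->
  (forall b, dot (vadd (mv (tr B) (g (mv B (mv S a)))) (vscale lam (mv S a))) (mv S b) = 0) ->
  Zf_is f (g (mv B xB)) (mm B (mm (projS_perp S X) (tr B))) Z ->
  2 * mu * Z ^ 2 <= lam ->
  / lam * norm2 (mv (tr B) (vsub (g (mv B (mv S a))) (g (mv B xB))))
  <= sqrt (mu / (2 * lam)) * Z * norm2 xB.
Proof.
move=> Hpinv HxB Ha HZ HlZ.
have HZ0 := Zf_nonneg HZ.
set D := vsub (g (mv B (mv S a))) (g (mv B xB)).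
case: (classic (exists i, D i <> 0)) => [HD | HD0]; last first.
  have -> : mv (tr B) D = fun _ => 0.
    rewrite -(mv_zero (tr B)); congr mv; apply: functional_extensionality => i.
    by apply: NNPP => Hi; apply: HD0; exists i.
  rewrite /norm2 dot0l sqrt_0 Rmult_0_r.
  by apply: Rmult_le_pos; [apply: Rmult_le_pos; [apply: sqrt_pos |] | apply: norm2_ge0].
set u := mv (tr B) D.
have HDD := dot_pos HD.
(* co-coercivity:  |D|^2 <= mu <u, S a - x_B> *)
have Hcoco := cocoercive Hg Hc Hl (mv B (mv S a)) (mv B xB).
rewrite -/D -mv_sub dot_mv_tr -/u in Hcoco.
have Hmu : 0 < mu.
  have HnD : 0 < norm2 D by apply: sqrt_lt_R0.
  have := Hl (mv B (mv S a)) (mv B xB); rewrite -/D.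
  by have := norm2_ge0 (vsub (mv B (mv S a)) (mv B xB)); nra.
have Hres := residual_identity Hpinv HxB Ha.
have HQ := Zf_bound HZ HD.
rewrite (Zf_form_proj Hpinv) -/u in HQ.
have Hdom : in_dom_conj f (vadd (g (mv B xB)) D).
  rewrite (_ : vadd (g (mv B xB)) D = g (mv B (mv S a))); first exact: grad_in_dom_conj.
  by apply: functional_extensionality => i; rewrite /vadd /D /vsub; ring.
apply: sqrt_scaled_bound => //; [lra | apply: norm2_ge0 | apply: norm2_ge0 |].
rewrite !norm2_sq.
apply: (scalar_bound Hlam Hmu HZ0 HlZ _ _ _ _ (projS_pythagoras Hpinv u) Hcoco Hres);
  try exact: dot_ge0.
- exact: cauchy_schwarz_sq.
- exact: HQ.
Qed.

End SketchBound.

Theorem theorem3 (n m : nat) (K : mat n n) (St : mat n m) (lam mu : R)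
    (f : vec n -> R) (g : vec n -> vec n)
    (Kh : mat n n) (w_star : vec n) (alpha_star : vec m)
    (xB : vec n) (X : mat m m) (Z : R) :
  psd K ->
  0 < lam ->
  convex f ->
  has_gradient f g ->
  lipschitz g mu ->
  (* Kh = K^{1/2} *)
  is_psd_sqrt K Kh ->
  is_minimizer (fun w : vec n => f (mv K w) + lam / 2 * dot w (mv K w)) w_star ->
  is_minimizer (fun a : vec m =>
      f (mv K (mv St a)) + lam / 2 * dot a (mv (mm (tr St) (mm K St)) a)) alpha_star ->
  (* x_B^* for B = K^{1/2} *)
  is_minimizer (fun x : vec n => f (mv Kh x) + lam / 2 * (norm2 x) ^ 2) xB ->
  (* X = (S^T S)^dagger for S = K^{1/2} St *)
  is_pinv (mm (tr (mm Kh St)) (mm Kh St)) X ->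
  (* Z = Z_f(K^{1/2}, K^{1/2} St) *)
  Zf_is f (g (mv Kh xB)) (mm Kh (mm (projS_perp (mm Kh St) X) (tr Kh))) Z ->
  lam >= 2 * mu * Z ^ 2 ->
  let wt := vscale (- / lam) (g (mv K (mv St alpha_star))) in
  norm2 (mv Kh (vsub wt w_star)) <= sqrt (mu / (2 * lam)) * Z * norm2 (mv Kh w_star).
Proof.
move=> _ Hlam Hc Hg Hl [[Kh_sym _] HKK] Hw Ha HxB Hpinv HZ HlZ wt.
set S := mm Kh St.
have EK : forall v, mv K v = mv Kh (mv Kh v) by move=> v; rewrite -(mv_meq v HKK) mv_mm.
(* K^{1/2} w_star solves the ridge problem for B = K^{1/2}, hence equals x_B. *)
have Hstat_xB := ridge_stationary Hg HxB.
have Hstat_w : stationary g Kh lam (mv Kh w_star).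
  apply: (kernel_stationary Hg Kh_sym); apply: minimizer_ext Hw => v.
  by rewrite (quad_form_sqrt _ Kh_sym HKK) EK.
have Ew : mv Kh w_star = xB := stationary_unique Hg Hc Hlam Hstat_w Hstat_xB.
have Ha_min : is_minimizer
    (fun c => f (mv Kh (mv S c)) + lam / 2 * norm2 (mv S c) ^ 2) alpha_star.
  apply: minimizer_ext Ha => c.
  by rewrite /S !mv_mm dot_mv_tr (quad_form_sqrt _ Kh_sym HKK) EK.
have Hbound := sketch_error_bound Hg Hc Hl Hlam Hpinv Hstat_xB
  (subspace_stationary Hg Ha_min) HZ (Rge_le _ _ HlZ).
have Eerr : mv Kh (vsub wt w_star)
    = vscale (- / lam) (mv (tr Kh) (vsub (g (mv Kh (mv S alpha_star))) (g (mv Kh xB)))).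
  rewrite /wt mv_sub mv_scale Ew EK /S mv_mm mv_sub Hstat_xB tr_sym //.
  by apply: functional_extensionality => i; rewrite /vsub /vscale; field; lra.
rewrite Eerr norm2_scale Rabs_Ropp Rabs_pos_eq ?Ew; first exact: Hbound.
by apply: Rlt_le; apply: Rinv_0_lt_compat.
Qed.
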